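(* Let $n\ge1$ and consider $n$ elements with states ${\bf x}_i(t)\in\mathbb{R}^m$ and dynamics $$\dot{\bf x}_i(t)=\sum_{j\in\mathcal{N}_i}{\bf K}_{ji}\big({\bf x}_j(t-T_{ji})-{\bf x}_i(t)\big),\qquad i=1,\dots,n,$$ where $\mathcal{N}_i\subseteq\{1,\dots,n\}\setminus\{i\}$ is a fixed set of neighbors of $i$, each ${\bf K}_{ji}$ is a constant symmetric positive definite $m\times m$ matrix, and each $T_{ji}\ge0$ is a constant delay (delays may differ from link to link and between the two directions of a link). Assume the network (directed graph with an edge $j\to i$ whenever $j\in\mathcal{N}_i$) is connected, and that the links are either bidirectional with ${\bf K}_{ji}={\bf K}_{ij}$, or unidirectional but formed into closed rings with identical gains within each ring (or a mixture of both types). Then, regardless of the values of the delays and of the (continuous) initial functions, every solution asymptotically reaches group agreement: ${\bf x}_i(t)-{\bf x}_j(t)\to0$ as $t\to\infty$ for all $i,j$. *)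

From HB Require Import structures.
From mathcomp Require Import all_boot all_order all_algebra.
From mathcomp Require Import all_classical all_reals all_analysis.
Set Implicit Arguments. Unset Strict Implicit. Unset Printing Implicit Defensive.
Import Order.TTheory GRing.Theory Num.Theory.
Import numFieldNormedType.Exports.
Local Open Scope ring_scope.

Definition sym_posdef (R : realType) (m : nat) (K : 'M[R]_m) : Prop :=
  K^T = K /\ forall v : 'cV[R]_m, v != 0 -> 0 < (v^T *m K *m v) 0 0.

Definition network_connected (n : nat) (N : 'I_n -> {set 'I_n}) : Prop :=
  forall a b : 'I_n, connect [rel u v | (u \in N v) || (v \in N u)] a b.

(* The directed edge j -> i belongs to the ring r (r lists the nodes of a
   closed directed ring in order: r_0 -> r_1 -> ... -> r_{k-1} -> r_0). *)
Definition ring_edge (n : nat) (r : seq 'I_n) (j i : 'I_n) : bool :=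
  (j \in r) && (next r j == i).

Definition link_structure (R : realType) (n m : nat)
    (N : 'I_n -> {set 'I_n}) (K : 'I_n -> 'I_n -> 'M[R]_m) : Prop :=
  exists (B : rel 'I_n) (rings : seq (seq 'I_n)),
    [/\ (forall j i, B j i -> [/\ j \in N i, i \in N j, B i j & K j i = K i j]),
        (forall r, r \in rings ->
           [/\ uniq r, (2 <= size r)%N,
               (forall j i, ring_edge r j i -> j \in N i) &
               (forall j i j' i', ring_edge r j i -> ring_edge r j' i' ->
                  K j i = K j' i')]) &
        (forall j i, j \in N i ->
           (B j i + count (fun r => ring_edge r j i) rings = 1)%N)].

From HB Require Import structures.
From mathcomp Require Import all_boot all_order all_algebra.
From mathcomp Require Import all_classical all_reals all_analysis.
From mathcomp Require Import ring lra.
Import Order.TTheory GRing.Theory Num.Theory.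
Import numFieldNormedType.Exports.
Local Open Scope classical_set_scope.
Local Open Scope ring_scope.
Set Implicit Arguments. Unset Strict Implicit. Unset Printing Implicit Defensive.

(* Along a solution, the Lyapunov-Krasovskii functional
     V(t) = sum_i |x_i(t)|^2 + sum_i sum_{j in N_i} int_{t - T_ji}^t x_j^T K_ji x_j
   satisfies V' = -g with g = sum_i sum_{j in N_i} e_ji^T K_ji e_ji, where
   e_ji(t) = x_j(t - T_ji) - x_i(t).  The cross terms cancel because the link
   structure balances the gains leaving each node against those entering it
   (symmetry of bidirectional links, rotation invariance of rings).  So V is
   nonincreasing, the states are bounded, g' is bounded, and Barbalat's lemma
   gives g -> 0, i.e. e_ji -> 0.  Then the drifts vanish, hence so does
   x_j(t) - x_j(t - T_ji); neighbours agree asymptotically, and connectivity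
   propagates agreement to all pairs. *)

Section Calculus.
Context {R : realType}.

Lemma is_derive_delay (W : normedModType R) (f : R -> W) (c t : R) (df : W) :
  is_derive (t - c) 1 f df -> is_derive t 1 (fun s => f (s - c)) df.
Proof.
have quotientE :
    (fun h : R => h^-1 *: (((fun s => f (s - c)) \o shift t) (h *: 1) - f (t - c))) =
    (fun h : R => h^-1 *: ((f \o shift (t - c)) (h *: 1) - f (t - c))).
  by apply/funext => h /=; rewrite addrA.
move=> [df_t Df_t]; split; first by move: df_t; rewrite /derivable quotientE.
by rewrite -Df_t /derive quotientE.
Qed.

Lemma is_derive_bigsum (W : normedModType R) (I : finType) (P : pred I)
    (f : I -> R -> W) (df : I -> W) (t : R) :
  (forall i, P i -> is_derive t 1 (f i) (df i)) ->
  is_derive t 1 (fun s => \sum_(i | P i) f i s) (\sum_(i | P i) df i).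
Proof.
move=> fP; have -> : (fun s => \sum_(i | P i) f i s) = \sum_(i | P i) f i.
  by apply/funext => s; rewrite fct_sumE.
elim/big_ind2 : _ => //; first exact: is_derive_cst.
by move=> f1 d1 f2 d2; exact: is_deriveD.
Qed.

Lemma is_derive_mxE (p q : nat) (y : R -> 'M[R]_(p, q)) (dy : 'M[R]_(p, q))
    (t : R) (a : 'I_p) (b : 'I_q) :
  is_derive t 1 y dy -> is_derive t 1 (fun s => y s a b) (dy a b).
Proof.
move=> [dery <-]; split; first by move/derivable_mxP : dery; apply.
by rewrite derive_mx // mxE.
Qed.

Lemma derivable_continuous (f : R -> R) (t : R) :
  derivable f t 1 -> {for t, continuous f}.
Proof. by move=> /derivable1_diffP/differentiable_continuous. Qed.

Lemma is_derive_integral (h : R -> R) (a t : R) :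
  (forall s, a <= s -> {for s, continuous h}) -> a < t ->
  is_derive t 1 (fun s => parameterized_integral lebesgue_measure a s h) (h t).
Proof.
move=> hC at_; have tt1 : t < t + 1 by rewrite ltrDl.
have hint : lebesgue_measure.-integrable `[a, t + 1] (EFin \o h).
  apply: continuous_compact_integrable; first exact: segment_compact.
  apply: continuous_in_subspaceT => s; rewrite inE /= in_itv /= => /andP[+ _].
  exact: hC.
have [dF DF] := continuous_FTC1_closed tt1 hint at_ (hC _ (ltW at_)).
by split; [exact: dF | rewrite -derive1E].
Qed.

Lemma mvt_derive (f df : R -> R) (c a b : R) :
  (forall t, c < t -> is_derive t 1 f (df t)) -> c < a -> a <= b ->
  exists2 z, a <= z <= b & f b - f a = df z * (b - a).
Proof.
move=> fD ca ab.
have fDab t : t \in `]a, b[%R -> is_derive t 1 f (df t).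
  by rewrite in_itv /= => /andP[at_ _]; apply: fD; exact: lt_trans at_.
have fC : {within `[a, b], continuous f}.
  apply: continuous_in_subspaceT => t; rewrite inE /= in_itv /= => /andP[at_ _].
  by apply: derivable_continuous; case: (fD t (lt_le_trans ca at_)).
by have [z] := MVT_segment ab fDab fC; rewrite in_itv /=; exists z.
Qed.

Lemma derive_le0_nonincr (f df : R -> R) (c s t : R) :
  (forall u, c < u -> is_derive u 1 f (df u)) -> (forall u, c < u -> df u <= 0) ->
  c < s -> s <= t -> f t <= f s.
Proof.
move=> fD df_le0 cs st; have [z /andP[sz _] fst] := mvt_derive fD cs st.
by rewrite -subr_le0 fst mulr_le0_ge0 ?subr_ge0 // df_le0 // (lt_le_trans cs).
Qed.

End Calculus.

Section QuadraticForm.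
Context {R : realType} {m : nat}.
Implicit Types (K : 'M[R]_m) (u v w : 'cV[R]_m).

Definition qform K u w : R := (u^T *m K *m w) 0 0.

Lemma qformE K u w :
  qform K u w = \sum_(b < m) \sum_(a < m) K a b * (u a 0 * w b 0).
Proof.
rewrite /qform mxE; apply: eq_bigr => b _; rewrite mxE big_distrl /=.
by apply: eq_bigr => a _; rewrite !mxE; ring.
Qed.

Lemma qformBl K u v w : qform K (u - v) w = qform K u w - qform K v w.
Proof. by rewrite /qform linearB !mulmxBl !mxE. Qed.

Lemma qformBr K u v w : qform K u (v - w) = qform K u v - qform K u w.
Proof. by rewrite /qform mulmxBr !mxE. Qed.

Lemma qformZl K (c : R) u w : qform K (c *: u) w = c * qform K u w.
Proof. by rewrite /qform linearZ /= -!scalemxAl !mxE. Qed.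

Lemma qformZr K (c : R) u w : qform K u (c *: w) = c * qform K u w.
Proof. by rewrite /qform -scalemxAr !mxE. Qed.

Lemma qform0r K u : qform K u 0 = 0.
Proof. by rewrite /qform mulmx0 mxE. Qed.

Lemma qform_sumr (I : finType) (P : pred I) K u (w : I -> 'cV[R]_m) :
  qform K u (\sum_(j | P j) w j) = \sum_(j | P j) qform K u (w j).
Proof. by rewrite /qform mulmx_sumr summxE. Qed.

Lemma qform1_mulmx K u w : qform 1%:M u (K *m w) = qform K u w.
Proof. by rewrite /qform mulmx1 mulmxA. Qed.

Lemma qformC K u w : K^T = K -> qform K u w = qform K w u.
Proof.
move=> KT; have -> : qform K u w = (u^T *m K *m w)^T 0 0 by rewrite mxE.
by rewrite !trmx_mul trmxK KT mulmxA.
Qed.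

Lemma qform_polarization K u w : K^T = K ->
  qform K u (w - u) *+ 2 = qform K w w - qform K u u - qform K (w - u) (w - u).
Proof. by move=> KT; rewrite !qformBl !qformBr (qformC w u KT); ring. Qed.

Lemma qform1_sqr u : qform 1%:M u u = \sum_(a < m) u a 0 ^+ 2.
Proof. by rewrite /qform mulmx1 mxE; apply: eq_bigr => a _; rewrite mxE expr2. Qed.

Lemma qform1_ge0 u : 0 <= qform 1%:M u u.
Proof. by rewrite qform1_sqr sumr_ge0 // => a _; exact: sqr_ge0. Qed.

Lemma sqr_coord_le_qform1 u a : u a 0 ^+ 2 <= qform 1%:M u u.
Proof.
by rewrite qform1_sqr (bigD1 a) //= lerDl sumr_ge0 // => b _; exact: sqr_ge0.
Qed.

Section PositiveDefinite.
Variable K : 'M[R]_m.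
Hypothesis K_pd : sym_posdef K.

Lemma qform_ge0 w : 0 <= qform K w w.
Proof.
have [->|w0] := eqVneq w 0; first by rewrite qform0r.
by case: K_pd => _ /(_ w w0) /ltW.
Qed.

Lemma qform_Cauchy_Schwarz u w : qform K u w ^+ 2 <= qform K u u * qform K w w.
Proof.
have [->|w0] := eqVneq w 0; first by rewrite !qform0r expr0n /= mulr0.
have c_gt0 : 0 < qform K w w by case: K_pd => _; exact.
set b := qform K u w; set c := qform K w w.
have := qform_ge0 (u - (b / c) *: w).
rewrite !qformBl !qformBr !qformZl !qformZr (@qformC K w u); last by case: K_pd.
rewrite -/b -/c => h.
suff : 0 <= qform K u u - b ^+ 2 / c by rewrite subr_ge0 ler_pdivrMr // mulrC.
by apply: le_trans h _; rewrite le_eqVlt; apply/orP; left; apply/eqP; field; rewrite gt_eqF.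
Qed.

Lemma posdef_unitmx : K \in unitmx.
Proof.
case: K_pd => KT Kpos; rewrite unitmxE unitfE; apply/negP => /det0P [v v0 vK].
have vT0 : v^T != 0 by apply: contra v0 => /eqP h; rewrite -(trmxK v) h trmx0.
have := Kpos _ vT0; rewrite trmxK -mulmxA.
by rewrite -{1}KT -trmx_mul vK trmx0 mulmx0 mxE ltxx.
Qed.

(* The coordinate [w a] is [qform K u w] for [u := K^-1 e_a]; then Cauchy-Schwarz. *)
Lemma sqr_coord_le_qform a : exists2 C, 0 <= C & forall w, w a 0 ^+ 2 <= C * qform K w w.
Proof.
pose u : 'cV[R]_m := invmx K *m delta_mx a 0.
exists (qform K u u); first exact: qform_ge0.
move=> w; suff -> : w a 0 = qform K u w by exact: qform_Cauchy_Schwarz.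
case: K_pd => KT _.
rewrite /qform /u trmx_mul trmx_inv KT -(mulmxA _ (invmx K)) mulVmx ?posdef_unitmx //.
by rewrite mulmx1 trmx_delta -rowE mxE.
Qed.

End PositiveDefinite.

Lemma is_derive_qform K (y z : R -> 'cV[R]_m) (dy dz : 'cV[R]_m) (t : R) :
  is_derive t 1 y dy -> is_derive t 1 z dz ->
  is_derive t 1 (fun s => qform K (y s) (z s)) (qform K dy (z t) + qform K (y t) dz).
Proof.
move=> yD zD; under eq_fun do rewrite qformE.
apply: is_derive_eq.
  apply: is_derive_bigsum => b _; apply: is_derive_bigsum => a _.
  apply: is_deriveZ; apply: is_deriveM; exact: is_derive_mxE.
rewrite !qformE -big_split; apply: eq_bigr => b _; rewrite -big_split.
by apply: eq_bigr => a _ /=; rewrite /GRing.scale /=; ring.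
Qed.

End QuadraticForm.

Section Asymptotics.
Context {R : realType}.
Implicit Types (f g : R -> R) (c : R).

Definition bounded_at_oo f := exists C T0, forall t, T0 <= t -> `|f t| <= C.

Definition vanishing_at_oo f := forall e, 0 < e -> exists T0, forall t, T0 <= t -> `|f t| <= e.

Lemma fun_sum_ind (Q : (R -> R) -> Prop) (I : Type) (r : seq I) (P : pred I)
    (F : I -> R -> R) :
  Q (fun=> 0) -> (forall f g, Q f -> Q g -> Q (fun t => f t + g t)) ->
  (forall i, P i -> Q (F i)) -> Q (fun t => \sum_(i <- r | P i) F i t).
Proof.
move=> Q0 QD QF; elim: r => [|i r IHr]; first by under eq_fun do rewrite big_nil.
under eq_fun do rewrite big_cons.
by case Pi : (P i) => //; exact: QD (QF _ Pi) IHr.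
Qed.

Lemma bounded_at_oo_cst c : bounded_at_oo (fun=> c).
Proof. by exists `|c|, 0. Qed.

Lemma bounded_at_ooD f g :
  bounded_at_oo f -> bounded_at_oo g -> bounded_at_oo (fun t => f t + g t).
Proof.
move=> [C1 [T1 fC]] [C2 [T2 gC]]; exists (C1 + C2), (Num.max T1 T2) => t.
by rewrite ge_max => /andP[/fC ? /gC ?]; rewrite (le_trans (ler_normD _ _)) // lerD.
Qed.

Lemma bounded_at_ooN f : bounded_at_oo f -> bounded_at_oo (fun t => - f t).
Proof. by move=> [C [T0 fC]]; exists C, T0 => t /fC; rewrite normrN. Qed.

Lemma bounded_at_ooB f g :
  bounded_at_oo f -> bounded_at_oo g -> bounded_at_oo (fun t => f t - g t).
Proof. by move=> fb gb; apply: bounded_at_ooD (bounded_at_ooN gb). Qed.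

Lemma bounded_at_ooM f g :
  bounded_at_oo f -> bounded_at_oo g -> bounded_at_oo (fun t => f t * g t).
Proof.
move=> [C1 [T1 fC]] [C2 [T2 gC]]; exists (C1 * C2), (Num.max T1 T2) => t.
by rewrite ge_max => /andP[/fC ? /gC ?]; rewrite normrM ler_pM.
Qed.

Lemma bounded_at_oo_sum (I : Type) (r : seq I) (P : pred I) (F : I -> R -> R) :
  (forall i, P i -> bounded_at_oo (F i)) ->
  bounded_at_oo (fun t => \sum_(i <- r | P i) F i t).
Proof. exact: fun_sum_ind (bounded_at_oo_cst 0) bounded_at_ooD. Qed.

Lemma bounded_at_oo_delay f c : bounded_at_oo f -> bounded_at_oo (fun t => f (t - c)).
Proof. by move=> [C [T0 fC]]; exists C, (T0 + c) => t tT; apply: fC; rewrite lerBrDr. Qed.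

Lemma vanishing_at_oo0 : vanishing_at_oo (fun=> 0).
Proof. by move=> e e_gt0; exists 0 => t _; rewrite normr0 ltW. Qed.

Lemma vanishing_at_ooD f g :
  vanishing_at_oo f -> vanishing_at_oo g -> vanishing_at_oo (fun t => f t + g t).
Proof.
move=> fv gv e e_gt0; have e2_gt0 : 0 < e / 2 by rewrite divr_gt0.
have [[T1 fe] [T2 ge]] := (fv _ e2_gt0, gv _ e2_gt0).
exists (Num.max T1 T2) => t; rewrite ge_max => /andP[/fe ? /ge ?].
by rewrite (le_trans (ler_normD _ _)) // (splitr e) lerD.
Qed.

Lemma vanishing_at_ooN f : vanishing_at_oo f -> vanishing_at_oo (fun t => - f t).
Proof. by move=> fv e /fv [T0 fe]; exists T0 => t /fe; rewrite normrN. Qed.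

Lemma vanishing_at_oo_sum (I : Type) (r : seq I) (P : pred I) (F : I -> R -> R) :
  (forall i, P i -> vanishing_at_oo (F i)) ->
  vanishing_at_oo (fun t => \sum_(i <- r | P i) F i t).
Proof. exact: fun_sum_ind vanishing_at_oo0 vanishing_at_ooD. Qed.

Lemma vanishing_at_oo_le f g :
  vanishing_at_oo g -> (forall t, `|f t| <= `|g t|) -> vanishing_at_oo f.
Proof. by move=> gv fg e /gv [T0 ge]; exists T0 => t /ge; exact: le_trans. Qed.

Lemma vanishing_at_ooMl c f : vanishing_at_oo f -> vanishing_at_oo (fun t => c * f t).
Proof.
move=> fv e e_gt0; have c1_gt0 : 0 < `|c| + 1 by rewrite ltr_pwDr.
have [T0 fe] := fv _ (divr_gt0 e_gt0 c1_gt0); exists T0 => t /fe fte.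
rewrite normrM -(divfK (lt0r_neq0 c1_gt0) e) [X in _ <= X]mulrC.
by rewrite ler_pM // lerDl.
Qed.

Lemma vanishing_at_oo_sqr f : vanishing_at_oo (fun t => f t ^+ 2) -> vanishing_at_oo f.
Proof.
move=> fv e e_gt0; have [T0 fe] := fv _ (exprn_gt0 2 e_gt0).
exists T0 => t /fe; rewrite normrX ler_sqr ?normr_ge0 //; exact: ltW.
Qed.

End Asymptotics.

Section MatrixAsymptotics.
Context {R : realType} {p q : nat}.
Implicit Types (y z : R -> 'M[R]_(p, q)).

Definition mx_bounded_at_oo y := forall a b, bounded_at_oo (fun t => y t a b).

Definition mx_vanishing_at_oo y := forall a b, vanishing_at_oo (fun t => y t a b).

Lemma mx_bounded_at_ooB y z :
  mx_bounded_at_oo y -> mx_bounded_at_oo z -> mx_bounded_at_oo (fun t => y t - z t).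
Proof.
move=> yb zb a b; under eq_fun do rewrite !mxE; exact: bounded_at_ooB.
Qed.

Lemma mx_vanishing_at_ooD y z :
  mx_vanishing_at_oo y -> mx_vanishing_at_oo z -> mx_vanishing_at_oo (fun t => y t + z t).
Proof.
move=> yv zv a b; under eq_fun do rewrite !mxE; exact: vanishing_at_ooD.
Qed.

Lemma mx_vanishing_at_ooN y : mx_vanishing_at_oo y -> mx_vanishing_at_oo (fun t => - y t).
Proof. by move=> yv a b; under eq_fun do rewrite !mxE; exact: vanishing_at_ooN. Qed.

Lemma mx_bounded_at_oo_delay y c :
  mx_bounded_at_oo y -> mx_bounded_at_oo (fun t => y (t - c)).
Proof. by move=> yb a b; exact: (bounded_at_oo_delay (f := fun t => y t a b)). Qed.

Lemma mx_bounded_at_oo_sum (I : finType) (P : pred I) (F : I -> R -> 'M[R]_(p, q)) :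
  (forall i, P i -> mx_bounded_at_oo (F i)) ->
  mx_bounded_at_oo (fun t => \sum_(i | P i) F i t).
Proof.
move=> Fb a b; under eq_fun do rewrite summxE.
by apply: bounded_at_oo_sum => i Pi; exact: Fb.
Qed.

Lemma mx_vanishing_at_oo_sum (I : finType) (P : pred I) (F : I -> R -> 'M[R]_(p, q)) :
  (forall i, P i -> mx_vanishing_at_oo (F i)) ->
  mx_vanishing_at_oo (fun t => \sum_(i | P i) F i t).
Proof.
move=> Fv a b; under eq_fun do rewrite summxE.
by apply: vanishing_at_oo_sum => i Pi; exact: Fv.
Qed.

Lemma mx_vanishing_at_oo_cvg y :
  mx_vanishing_at_oo y -> y t @[t --> +oo] --> (0 : 'M[R]_(p, q)).
Proof.
move=> yv; apply/cvgrPdist_le => e e_gt0.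
have : \forall t \near +oo, forall ab : 'I_p * 'I_q, `|y t ab.1 ab.2| <= e.
  apply: filter_forall => -[a b]; have [T0 ye] := yv a b e e_gt0.
  by exists T0; split; [exact: num_real | move=> t /ltW /ye].
apply: filter_app; near=> t => ye.
rewrite sub0r normrN /Num.Def.normr /= mx_normrE.
by apply: bigmax_le => [|ab _]; [exact: ltW | exact: ye].
Unshelve. all: by end_near.
Qed.

End MatrixAsymptotics.

Lemma mx_bounded_at_oo_mulmx (R : realType) (p q r : nat) (A : 'M[R]_(p, q))
    (y : R -> 'M[R]_(q, r)) :
  mx_bounded_at_oo y -> mx_bounded_at_oo (fun t => A *m y t).
Proof.
move=> yb a b; under eq_fun do rewrite mxE; apply: bounded_at_oo_sum => k _.
exact/bounded_at_ooM/yb/bounded_at_oo_cst.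
Qed.

Lemma mx_vanishing_at_oo_mulmx (R : realType) (p q r : nat) (A : 'M[R]_(p, q))
    (y : R -> 'M[R]_(q, r)) :
  mx_vanishing_at_oo y -> mx_vanishing_at_oo (fun t => A *m y t).
Proof.
move=> yv a b; under eq_fun do rewrite mxE; apply: vanishing_at_oo_sum => k _.
exact/vanishing_at_ooMl/yv.
Qed.

Lemma bounded_at_oo_qform (R : realType) (m : nat) (K : 'M[R]_m) (u w : R -> 'cV[R]_m) :
  mx_bounded_at_oo u -> mx_bounded_at_oo w -> bounded_at_oo (fun t => qform K (u t) (w t)).
Proof.
move=> ub wb; under eq_fun do rewrite qformE.
apply: bounded_at_oo_sum => b _; apply: bounded_at_oo_sum => a _.
exact/bounded_at_ooM/bounded_at_ooM/wb/ub/bounded_at_oo_cst.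
Qed.

Section Barbalat.
Context {R : realType}.

Lemma lower_bound_from_slope (g dg : R -> R) (a t z e C : R) :
  (forall s, a < s -> is_derive s 1 g (dg s)) -> (forall s, t <= s -> `|dg s| <= C) ->
  a < t -> 0 < C -> e < g t -> t <= z <= t + e / (2 * C) -> e / 2 <= g z.
Proof.
move=> gD dgC at_ C_gt0 e_lt /andP[tz zd].
have [w /andP[tw _] gzt] := mvt_derive gD at_ tz.
have : - C * (z - t) <= dg w * (z - t).
  by rewrite ler_wpM2r ?subr_ge0 // lerNl; have /ler_normlP[] := dgC _ tw.
have : C * (z - t) <= e / 2.
  have -> : e / 2 = C * (e / (2 * C)) by field; rewrite lt0r_neq0.
  by rewrite ler_pM2l // lerBlDl.
lra.
Qed.

Lemma infinite_descent (V : R -> R) (b d q : R) :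
  0 < q -> 0 <= d -> (forall s t, b <= s -> s <= t -> V t <= V s) ->
  (forall t, b <= t -> 0 <= V t) ->
  ~ (forall T0, exists2 t, Num.max T0 b <= t & V (t + d) <= V t - q).
Proof.
move=> q_gt0 d_ge0 Vnincr V_ge0 drops.
have descent k : exists2 t, b <= t & V t <= V b - k%:R * q.
  elim: k => [|k [t bt Vt]]; first by exists b; rewrite ?mul0r ?subr0.
  have [s] := drops t; rewrite ge_max => /andP[ts bs] Vs.
  exists (s + d); first by rewrite (le_trans bs) // lerDl.
  have := Vnincr _ _ bt ts; rewrite -natr1 mulrDl mul1r; lra.
have := archi_boundP (divr_ge0 (V_ge0 _ (lexx b)) (ltW q_gt0)).
rewrite ltr_pdivrMr // => Vb_lt.
have [t bt Vt] := descent (Num.bound (V b / q)).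
have := V_ge0 _ bt; lra.
Qed.

(* After an excursion [g t > e], the slope bound keeps [g >= e/2] on a window of
   width [e / (2 C)], which costs [V] at least [e^2 / (4 C)]; since [V >= 0], only
   finitely many such excursions fit. *)
Lemma Barbalat (V g dg : R -> R) (a : R) :
  (forall t, a < t -> is_derive t 1 V (- g t)) ->
  (forall t, a < t -> is_derive t 1 g (dg t)) -> bounded_at_oo dg ->
  (forall t, a < t -> 0 <= g t) -> (forall t, a < t -> 0 <= V t) ->
  vanishing_at_oo g.
Proof.
move=> VD gD [C0 [T1 dgC0]] g_ge0 V_ge0 e e_gt0.
pose C := `|C0| + 1; have C_gt0 : 0 < C by rewrite ltr_pwDr.
pose b := Num.max T1 (a + 1); pose d := e / (2 * C).
have ab : a < b by rewrite lt_max ltrDl ltr01 orbT.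
have d_gt0 : 0 < d by rewrite divr_gt0 ?mulr_gt0.
have dgC s : b <= s -> `|dg s| <= C.
  rewrite ge_max => /andP[/dgC0 dg_le _]; apply: le_trans dg_le _.
  by rewrite (le_trans (ler_norm C0)) // lerDl.
have Vnincr s t : b <= s -> s <= t -> V t <= V s.
  move=> bs; apply: derive_le0_nonincr VD _ (lt_le_trans ab bs) => u au.
  by rewrite oppr_le0 g_ge0.
have q_gt0 : 0 < e * d / 2 by rewrite divr_gt0 // mulr_gt0.
have Vb_ge0 t : b <= t -> 0 <= V t by move=> bt; apply/V_ge0/(lt_le_trans ab bt).
apply: contrapT => gnv; apply: (infinite_descent q_gt0 (ltW d_gt0) Vnincr Vb_ge0).
move=> T0; apply: contrapT => nodrop; apply: gnv; exists (Num.max T0 b) => t tT.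
rewrite leNgt; apply/negP => e_lt; apply: nodrop; exists t => //.
have bt : b <= t by move: tT; rewrite ge_max => /andP[].
have at_ := lt_le_trans ab bt.
have e_lt_g : e < g t by rewrite -[g t]ger0_norm ?g_ge0.
have [z /andP[tz zd] Vtd] := mvt_derive VD at_ (ler_wpDr (ltW d_gt0) (lexx t)).
have gz : e / 2 <= g z.
  apply: lower_bound_from_slope gD _ at_ C_gt0 e_lt_g _ => [s ts|].
    exact/dgC/(le_trans bt ts).
  by rewrite tz.
have : e / 2 * d <= g z * d by rewrite ler_wpM2r // ltW.
move: Vtd; rewrite addrAC subrr add0r mulNr mulrAC; lra.
Qed.

Lemma vanishing_delay_diff (f df : R -> R) (c : R) :
  0 <= c -> (forall t : R, 0 < t -> is_derive t 1 f (df t)) -> vanishing_at_oo df ->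
  vanishing_at_oo (fun t => f t - f (t - c)).
Proof.
move=> c_ge0 fD dfv e e_gt0; have c1_gt0 : 0 < c + 1 by rewrite ltr_wpDl.
have [T0 dfe] := dfv _ (divr_gt0 e_gt0 c1_gt0).
exists (Num.max (T0 + c) (c + 1)) => t; rewrite ge_max => /andP[T0t ct].
have tc_gt0 : 0 < t - c by rewrite subr_gt0 (lt_le_trans _ ct) // ltrDl.
have tct : t - c <= t by rewrite lerBlDr lerDl.
have [z /andP[tcz _] ->] := mvt_derive fD tc_gt0 tct.
have T0z : T0 <= z by rewrite (le_trans _ tcz) // lerBrDr.
rewrite subKr normrM (ger0_norm c_ge0) -(divfK (lt0r_neq0 c1_gt0) e).
by rewrite ler_pM ?dfe // lerDl.
Qed.

End Barbalat.

Lemma ring_edge_sum (n : nat) (V : zmodType) (r : seq 'I_n) (F : 'I_n -> 'I_n -> V) :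
  \sum_i \sum_j F j i *+ ring_edge r j i = \sum_(j | j \in r) F j (next r j).
Proof.
rewrite exchange_big /= [RHS]big_mkcond; apply: eq_bigr => j _.
rewrite (bigD1 (next r j)) //= big1 => [|i ne]; last first.
  by rewrite /ring_edge eq_sym (negbTE ne) andbF.
by rewrite /ring_edge eqxx andbT addr0; case: (j \in r).
Qed.

Section LinkBalance.
Context {R : realType} {n m : nat} (V : zmodType).
Variables (N : 'I_n -> {set 'I_n}) (K : 'I_n -> 'I_n -> 'M[R]_m).
Variables (B : rel 'I_n) (rings : seq (seq 'I_n)).
Hypothesis B_sym : forall j i, B j i -> [/\ j \in N i, i \in N j, B i j & K j i = K i j].
Hypothesis rings_closed : forall r, r \in rings ->
  [/\ uniq r, (2 <= size r)%N, (forall j i, ring_edge r j i -> j \in N i) &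
      (forall j i j' i', ring_edge r j i -> ring_edge r j' i' -> K j i = K j' i')].
Hypothesis edge_partition : forall j i, j \in N i ->
  (B j i + count (fun r => ring_edge r j i) rings = 1)%N.

Lemma edge_sum_decomp (F : 'I_n -> 'I_n -> V) :
  \sum_i \sum_(j | j \in N i) F j i =
  \sum_i \sum_j F j i *+ B j i + \sum_(r <- rings) \sum_(j | j \in r) F j (next r j).
Proof.
transitivity (\sum_i \sum_j F j i *+ B j i +
    \sum_(r <- rings) \sum_i \sum_j F j i *+ ring_edge r j i); last first.
  by congr (_ + _); apply: eq_bigr => r _; exact: ring_edge_sum.
rewrite [X in _ + X]exchange_big -big_split; apply: eq_bigr => i _ /=.
rewrite [X in _ + X]exchange_big -big_split [LHS]big_mkcond; apply: eq_bigr => j _ /=.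
rewrite sumrMnr -mulrnDr.
have -> : (\sum_(r <- rings) ring_edge r j i)%N = count (fun r => ring_edge r j i) rings.
  by rewrite -sumn_count sumnE big_map.
case: ifPn => [/edge_partition -> //|jNi].
have -> : B j i = false by apply: contraNF jNi => /B_sym[].
rewrite add0n (@eq_in_count _ _ pred0) ?count_pred0 // => r /rings_closed[_ _ rN _].
by apply: contraNF jNi; exact: rN.
Qed.

Lemma ring_sum_rotate (r : seq 'I_n) (phi : 'I_n -> V) :
  uniq r -> \sum_(j | j \in r) phi (next r j) = \sum_(j | j \in r) phi j.
Proof.
move=> ur; have next_inj : injective (next r) by apply: can_inj (prev_next ur).
by rewrite [RHS](reindex_inj next_inj) /=; apply: eq_bigl => j; rewrite mem_next.
Qed.

Lemma link_balance_of (phi : 'I_n -> 'M[R]_m -> V) :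
  \sum_i \sum_(j | j \in N i) phi j (K j i) = \sum_i \sum_(j | j \in N i) phi i (K j i).
Proof.
rewrite !edge_sum_decomp; congr (_ + _).
  rewrite exchange_big /=; apply: eq_bigr => i _; apply: eq_bigr => j _.
  case Bij: (B i j); first by have [_ _ -> ->] := B_sym Bij.
  by case Bji: (B j i) => //; have [_ _ ] := B_sym Bji; rewrite Bij.
rewrite !big_seq; apply: eq_bigr => r rr.
have [ur size_r _ Kr] := rings_closed rr.
have /hasP[j0 j0r _] : has predT r by rewrite has_predT ltnW.
have Kr_const j : j \in r -> K j (next r j) = K j0 (next r j0).
  by move=> jr; apply: Kr; rewrite /ring_edge ?jr ?j0r eqxx.
under eq_bigr => j jr do rewrite Kr_const //.
under [RHS]eq_bigr => j jr do rewrite Kr_const //.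
by rewrite (ring_sum_rotate (fun j => phi j _)).
Qed.

End LinkBalance.

Lemma link_balance (R : realType) (n m : nat) (V : zmodType) (N : 'I_n -> {set 'I_n})
    (K : 'I_n -> 'I_n -> 'M[R]_m) (phi : 'I_n -> 'M[R]_m -> V) :
  link_structure N K ->
  \sum_i \sum_(j | j \in N i) phi j (K j i) = \sum_i \sum_(j | j \in N i) phi i (K j i).
Proof.
case=> B [rings [B_sym rings_closed edge_partition]].
exact: (link_balance_of B_sym rings_closed edge_partition).
Qed.

Lemma connect_ind_rel (T : finType) (e : rel T) (Q : T -> T -> Prop) :
  (forall a, Q a a) -> (forall a b c, e a b -> Q b c -> Q a c) ->
  forall a b, connect e a b -> Q a b.
Proof.
move=> Qrefl Qstep a b /connectP[p path_p ->] {b}.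
by elim: p a path_p => [|c p IHp] a //= /andP[eac /IHp]; exact: Qstep.
Qed.

Section DelayedNetwork.
Context {R : realType} {n m : nat}.
Variables (N : 'I_n -> {set 'I_n}) (K : 'I_n -> 'I_n -> 'M[R]_m)
  (T : 'I_n -> 'I_n -> R) (D : R) (x : 'I_n -> R -> 'cV[R]_m).

Definition link_error j i t := x j (t - T j i) - x i t.

Definition drift i t := \sum_(j | j \in N i) K j i *m link_error j i t.

Hypothesis D_ge0 : 0 <= D.
Hypothesis K_pd : forall i j, j \in N i -> sym_posdef (K j i).
Hypothesis T_bounds : forall i j, j \in N i -> 0 <= T j i /\ T j i <= D.
Hypothesis links : link_structure N K.
Hypothesis x_dyn : forall i (t : R), 0 < t -> is_derive t 1 (x i) (drift i t).

Definition link_energy j i s := qform (K j i) (x j s) (x j s).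

Definition delay_energy j i t := parameterized_integral lebesgue_measure 1 t (link_energy j i).

(* The integrals are based at 1, where [x] is already differentiable; the
   functional is only used for [t > D + 1], so the initial data on [[-D, 0]]
   never enter the argument. *)
Definition lyapunov t := \sum_i qform 1%:M (x i t) (x i t) +
  \sum_i \sum_(j | j \in N i) (delay_energy j i t - delay_energy j i (t - T j i)).

Definition dissipation t :=
  \sum_i \sum_(j | j \in N i) qform (K j i) (link_error j i t) (link_error j i t).

Lemma link_energy_derive j i (s : R) : 0 < s ->
  is_derive s 1 (link_energy j i)
    (qform (K j i) (drift j s) (x j s) + qform (K j i) (x j s) (drift j s)).
Proof. by move=> s_gt0; apply: is_derive_qform; exact: x_dyn. Qed.

Lemma delay_energy_derive j i (t : R) : 1 < t ->
  is_derive t 1 (delay_energy j i) (link_energy j i t).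
Proof.
apply: is_derive_integral => s s_ge1; apply: derivable_continuous.
by case: (link_energy_derive j i (lt_le_trans ltr01 s_ge1)).
Qed.

Lemma dissipation_ge0 t : 0 <= dissipation t.
Proof. by do 2!apply: sumr_ge0 => ? ?; exact/qform_ge0/K_pd. Qed.

Lemma lyapunov_derive t : D + 1 < t -> is_derive t 1 lyapunov (- dissipation t).
Proof.
move=> Dt; have t_gt1 : 1 < t by rewrite (le_lt_trans _ Dt) // lerDr.
have tT_gt1 j i : j \in N i -> 1 < t - T j i.
  by case/T_bounds => _ TD; rewrite ltrBrDl (le_lt_trans _ Dt) // lerD2r.
apply: is_derive_eq.
  apply: is_deriveD.
    apply: is_derive_bigsum => i _; apply: is_derive_qform; exact/x_dyn/(lt_trans ltr01 t_gt1).
  apply: is_derive_bigsum => i _; apply: is_derive_bigsum => j jNi.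
  apply: is_deriveB; first exact: delay_energy_derive.
  by apply: is_derive_delay; exact: delay_energy_derive (tT_gt1 _ _ jNi).
have drift_term i : qform 1%:M (drift i t) (x i t) + qform 1%:M (x i t) (drift i t) +
    \sum_(j | j \in N i) (link_energy j i t - link_energy j i (t - T j i)) =
    \sum_(j | j \in N i) (link_energy j i t - qform (K j i) (x i t) (x i t)) -
    \sum_(j | j \in N i) qform (K j i) (link_error j i t) (link_error j i t).
  rewrite (qformC (drift i t) _ (trmx1 _ _)) -mulr2n qform_sumr -sumrMnl.
  rewrite -sumrB -big_split.
  apply: eq_bigr => j jNi /=; have [KT _] := K_pd jNi.
  rewrite qform1_mulmx /link_error qform_polarization // /link_energy; lra.
rewrite -big_split /= (eq_bigr _ (fun i _ => drift_term i)) sumrB.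
under eq_bigr do rewrite sumrB.
by rewrite sumrB (link_balance (fun k M => qform M (x k t) (x k t)) links) subrr sub0r.
Qed.

Lemma delay_energy_diff_ge0 j i t : j \in N i -> D + 1 < t ->
  0 <= delay_energy j i t - delay_energy j i (t - T j i).
Proof.
move=> jNi Dt; have [T_ge0 TD] := T_bounds jNi.
have tT_gt1 : 1 < t - T j i by rewrite ltrBrDl (le_lt_trans _ Dt) // lerD2r.
have tTt : t - T j i <= t by rewrite lerBlDr lerDl.
have [z _ ->] := mvt_derive (@delay_energy_derive j i) tT_gt1 tTt.
by rewrite mulr_ge0 ?subr_ge0 //; exact/qform_ge0/K_pd.
Qed.

Lemma state_energy_le_lyapunov t : D + 1 < t ->
  \sum_i qform 1%:M (x i t) (x i t) <= lyapunov t.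
Proof.
by move=> Dt; rewrite lerDl; do 2!apply: sumr_ge0 => ? ?; exact: delay_energy_diff_ge0.
Qed.

Lemma lyapunov_nonincr s t : D + 1 < s -> s <= t -> lyapunov t <= lyapunov s.
Proof.
apply: derive_le0_nonincr lyapunov_derive _ => u _.
by rewrite oppr_le0 dissipation_ge0.
Qed.

Lemma state_bounded i : mx_bounded_at_oo (x i).
Proof.
move=> a b; rewrite (ord1 b); exists (1 + lyapunov (D + 2)), (D + 2) => t Dt.
have D12 : D + 1 < D + 2 by rewrite ltrD2l ltr1n.
have xL : x i t a 0 ^+ 2 <= lyapunov (D + 2).
  apply: le_trans (lyapunov_nonincr D12 Dt).
  apply: le_trans (state_energy_le_lyapunov (lt_le_trans D12 Dt)).
  apply: le_trans (sqr_coord_le_qform1 _ a) _.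
  by rewrite (bigD1 i) //= lerDl sumr_ge0 // => k _; exact: qform1_ge0.
have := normr_ge0 (x i t a 0); rewrite -real_normK ?num_real // in xL; nra.
Qed.

Lemma link_error_bounded j i : mx_bounded_at_oo (link_error j i).
Proof. exact/mx_bounded_at_ooB/state_bounded/mx_bounded_at_oo_delay/state_bounded. Qed.

Lemma drift_bounded i : mx_bounded_at_oo (drift i).
Proof.
by apply: mx_bounded_at_oo_sum => j _; apply/mx_bounded_at_oo_mulmx/link_error_bounded.
Qed.

Definition link_error_slope j i t := drift j (t - T j i) - drift i t.

Definition dissipation_slope t := \sum_i \sum_(j | j \in N i)
  (qform (K j i) (link_error_slope j i t) (link_error j i t) +
   qform (K j i) (link_error j i t) (link_error_slope j i t)).

Lemma link_error_derive j i t : j \in N i -> D < t ->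
  is_derive t 1 (link_error j i) (link_error_slope j i t).
Proof.
move=> jNi Dt; have [_ TD] := T_bounds jNi.
have t_gt0 : 0 < t by rewrite (le_lt_trans D_ge0).
apply: is_deriveB; last exact: x_dyn.
by apply/is_derive_delay/x_dyn; rewrite subr_gt0 (le_lt_trans TD).
Qed.

Lemma dissipation_derive t : D < t -> is_derive t 1 dissipation (dissipation_slope t).
Proof.
move=> Dt; apply: is_derive_bigsum => i _; apply: is_derive_bigsum => j jNi.
by apply: is_derive_qform; exact: link_error_derive.
Qed.

Lemma dissipation_slope_bounded : bounded_at_oo dissipation_slope.
Proof.
have slope_bounded j i : mx_bounded_at_oo (link_error_slope j i).
  exact/mx_bounded_at_ooB/drift_bounded/mx_bounded_at_oo_delay/drift_bounded.
apply: bounded_at_oo_sum => i _; apply: bounded_at_oo_sum => j _.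
by apply: bounded_at_ooD; apply: bounded_at_oo_qform; auto using link_error_bounded.
Qed.

Lemma dissipation_vanishing : vanishing_at_oo dissipation.
Proof.
apply: (Barbalat (a := D + 1) lyapunov_derive _ dissipation_slope_bounded).
- by move=> t Dt; apply: dissipation_derive; rewrite (lt_trans _ Dt) // ltrDl.
- by move=> t _; exact: dissipation_ge0.
- move=> t Dt; apply: le_trans (state_energy_le_lyapunov Dt).
  by apply: sumr_ge0 => i _; exact: qform1_ge0.
Qed.

Lemma link_term_le_dissipation j i t : j \in N i ->
  qform (K j i) (link_error j i t) (link_error j i t) <= dissipation t.
Proof.
have term_ge0 k l : l \in N k -> 0 <= qform (K l k) (link_error l k t) (link_error l k t).
  by move/K_pd/qform_ge0.
move=> jNi; rewrite /dissipation (bigD1 i) // (bigD1 j jNi) //= -addrA lerDl.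
apply: addr_ge0; first by apply: sumr_ge0 => l /andP[/term_ge0].
by apply: sumr_ge0 => k _; apply: sumr_ge0 => l /term_ge0.
Qed.

Lemma link_error_vanishing j i : j \in N i -> mx_vanishing_at_oo (link_error j i).
Proof.
move=> jNi a b; rewrite (ord1 b); have [C C_ge0 coordC] := sqr_coord_le_qform (K_pd jNi) a.
apply/vanishing_at_oo_sqr/(vanishing_at_oo_le (vanishing_at_ooMl C dissipation_vanishing)).
move=> t; rewrite ger0_norm ?sqr_ge0 // (le_trans (coordC _)) // (le_trans _ (ler_norm _)) //.
by rewrite ler_wpM2l // link_term_le_dissipation.
Qed.

Lemma drift_vanishing i : mx_vanishing_at_oo (drift i).
Proof.
apply: mx_vanishing_at_oo_sum => j jNi.
exact/mx_vanishing_at_oo_mulmx/link_error_vanishing.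
Qed.

Lemma neighbour_agreement j i : j \in N i -> mx_vanishing_at_oo (fun t => x j t - x i t).
Proof.
move=> jNi; have [T_ge0 _] := T_bounds jNi.
have lag_vanishing : mx_vanishing_at_oo (fun t => x j t - x j (t - T j i)).
  move=> a b; under eq_fun do rewrite !mxE.
  apply: vanishing_delay_diff T_ge0 _ (drift_vanishing j a b) => t t_gt0.
  exact/is_derive_mxE/x_dyn.
have := mx_vanishing_at_ooD (link_error_vanishing jNi) lag_vanishing.
by congr mx_vanishing_at_oo; apply/funext => t; rewrite /link_error addrC subrKA.
Qed.

End DelayedNetwork.

Theorem theorem3 (R : realType) (n m : nat)
  (N : 'I_n -> {set 'I_n}) (K : 'I_n -> 'I_n -> 'M[R]_m)
  (T : 'I_n -> 'I_n -> R) (D : R)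
  (x : 'I_n -> R -> 'cV[R]_m) :
  (0 < n)%N ->
  (forall i, i \notin N i) ->
  (forall i j, j \in N i -> sym_posdef (K j i)) ->
  (forall i j, j \in N i -> 0 <= T j i /\ T j i <= D) ->
  network_connected N ->
  link_structure N K ->
  (* x is a solution: continuous on [-D, +oo) (continuous initial functions
     on [-D, 0]) and satisfying the delayed dynamics for t > 0 *)
  (forall i, {within [set t | - D <= t], continuous (x i)}) ->
  (forall (i : 'I_n) (t : R), 0 < t ->
     is_derive t (1 : R) (x i)
       (\sum_(j < n | j \in N i) K j i *m (x j (t - T j i) - x i t))) ->
  forall i j, (x i t - x j t) @[t --> +oo] --> (0 : 'cV[R]_m).
Proof.
move=> _ _ K_pd T_bounds connected links _ x_dyn.
have T_bounds' i j : j \in N i -> 0 <= T j i /\ T j i <= Num.max D 0.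
  by move=> /T_bounds[T_ge0 TD]; rewrite le_max TD.
have D'_ge0 : 0 <= Num.max D 0 by rewrite le_max lexx orbT.
have agree := neighbour_agreement D'_ge0 K_pd T_bounds' links x_dyn.
have edge_agree a b :
    (a \in N b) || (b \in N a) -> mx_vanishing_at_oo (fun t => x a t - x b t).
  case/orP => [/agree // | /agree/mx_vanishing_at_ooN].
  by under eq_fun do rewrite opprB.
move=> i j; apply: mx_vanishing_at_oo_cvg; move: i j (connected i j).
apply: connect_ind_rel => [a p q | a b c /edge_agree ab_agree bc_agree].
  by under eq_fun do rewrite subrr mxE; exact: vanishing_at_oo0.
have := mx_vanishing_at_ooD ab_agree bc_agree.
by under eq_fun do rewrite addrA subrK.
Qed.
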